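(* Let $A$ and $B$ be finite groups. Then the direct product $A \times B$ is weakly-top if and only if both $A$ and $B$ are weakly-top. Likewise, $A \times B$ is top if and only if both $A$ and $B$ are top.
   Context: For a group $H$, $H'$ denotes its commutator subgroup. A finite group $G$ is weakly-top if $|H/H'| \leq |G/G'|$ for every proper subgroup $H<G$, and top if $|H/H'| < |G/G'|$ for every proper subgroup $H<G$. *)

From mathcomp Require Import all_boot all_fingroup all_solvable.
Set Implicit Arguments. Unset Strict Implicit. Unset Printing Implicit Defensive.
Local Open Scope group_scope.

Definition abel_order (gT : finGroupType) (G : {group gT}) : nat :=
  #|G / G^`(1)|.

Definition weakly_top (gT : finGroupType) (G : {group gT}) : Prop :=
  forall H : {group gT}, H \proper G -> abel_order H <= abel_order G.

Definition top (gT : finGroupType) (G : {group gT}) : Prop :=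
  forall H : {group gT}, H \proper G -> abel_order H < abel_order G.

(* A subgroup K of A x B is an extension of its projection K2 on B by the
   kernel of that projection, which is a copy of K1 = {a | (a, 1) \in K} <= A.
   Abelianization is right exact and the derived subgroup of the kernel lies in
   K', so |K/K'| divides |K1/K1'| |K2/K2'|; moreover |K| = |K1| |K2|.  As
   (A x B)/(A x B)' = A/A' x B/B', weak topness of A and B bounds |K/K'| by
   |(A x B)/(A x B)'|, and when K is proper one of K1 < A, K2 < B is proper,
   which makes the bound strict for top groups.  Conversely, H x B and A x H
   are proper whenever H is. *)

From mathcomp Require Import all_boot all_fingroup all_solvable.
Set Implicit Arguments. Unset Strict Implicit. Unset Printing Implicit Defensive.
Local Open Scope group_scope.

Lemma abel_order_index (gT : finGroupType) (G : {group gT}) :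
  abel_order G = #|G : G^`(1)|.
Proof. by rewrite /abel_order card_quotient ?der_norm. Qed.

Lemma abel_order_gt0 (gT : finGroupType) (G : {group gT}) : 0 < abel_order G.
Proof. exact: cardG_gt0. Qed.

Lemma abel_order_isog (aT rT : finGroupType) (G : {group aT}) (H : {group rT}) :
  G \isog H -> abel_order G = abel_order H.
Proof.
case/isogP=> f injf imf; rewrite !abel_order_index -imf -morphim_der //.
by rewrite index_injm.
Qed.

Lemma abel_order_dprod (gT : finGroupType) (G H K : {group gT}) :
  H \x K = G -> abel_order G = (abel_order H * abel_order K)%N.
Proof.
move=> defG; apply/eqP; rewrite -(eqn_pmul2l (cardG_gt0 G^`(1))).
rewrite !abel_order_index Lagrange ?der_sub // -(dprod_card (der_dprod 1 defG)).
by rewrite mulnACA !Lagrange ?der_sub // (dprod_card defG).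
Qed.

Lemma abel_order_morphim_dvd (aT rT : finGroupType) (D K : {group aT})
    (f : {morphism D >-> rT}) :
  K \subset D -> abel_order K %| abel_order ('ker_K f) * abel_order (f @* K).
Proof.
move=> sKD; rewrite !abel_order_index -morphim_der //.
rewrite -(index_morphim_ker f (der_sub 1 K) sKD) mulnC dvdn_mul //.
by rewrite -indexgI indexgS // subsetI der_sub dergS ?subsetIl.
Qed.

Lemma abel_order_setX (aT bT : finGroupType) (H : {group aT}) (K : {group bT}) :
  abel_order (setX_group H K) = (abel_order H * abel_order K)%N.
Proof.
rewrite (abel_order_dprod (setX_dprod H K)).
rewrite -(abel_order_isog (isog_setX1 bT H)).
by rewrite -(abel_order_isog (isog_set1X aT K)).
Qed.

Lemma weakly_top_abel_order (gT : finGroupType) (G H : {group gT}) :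
  weakly_top G -> H \subset G -> abel_order H <= abel_order G.
Proof.
move=> wtG sHG; have [sGH | nsGH] := boolP (G \subset H).
  have eqHG : H :=: G by apply/eqP; rewrite eqEsubset sHG.
  by rewrite /abel_order eqHG.
by apply: wtG; rewrite properE sHG.
Qed.

Lemma top_weakly_top (gT : finGroupType) (G : {group gT}) : top G -> weakly_top G.
Proof. by move=> tG H /tG/ltnW. Qed.

Lemma setX_properl (aT bT : finType) (A1 B1 : {set aT}) (A2 : {set bT}) :
  0 < #|A2| -> A1 \proper B1 -> setX A1 A2 \proper setX B1 A2.
Proof.
move=> A2_gt0; rewrite !properEcard !cardsX ltn_pmul2r // => /andP[sAB1 ->].
by rewrite setXS.
Qed.

Lemma setX_properr (aT bT : finType) (A1 : {set aT}) (A2 B2 : {set bT}) :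
  0 < #|A1| -> A2 \proper B2 -> setX A1 A2 \proper setX A1 B2.
Proof.
move=> A1_gt0; rewrite !properEcard !cardsX ltn_pmul2l // => /andP[sAB2 ->].
by rewrite setXS.
Qed.

Section SubgroupsOfDirectProduct.
Variables (aT bT : finGroupType) (K : {group (aT * bT)}).

Local Notation K1 := (@fst aT bT @* 'ker_K (@snd aT bT))%G.
Local Notation K2 := (@snd aT bT @* K)%G.

Lemma isog_ker_snd_fst : 'ker_K (@snd aT bT) \isog K1.
Proof.
apply/isogP; exists (restrm (subsetT _) (fst_morphism aT bT)).
  apply/subsetP=> -[a b]; rewrite ker_restrm !inE /=.
  by case/andP=> /andP[_ /eqP->] /eqP->.
by rewrite morphim_restrm setIid.
Qed.

Lemma card_prod_subgroup : #|K| = (#|K1| * #|K2|)%N.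
Proof.
rewrite -(card_isog isog_ker_snd_fst) card_morphim setTI.
exact: esym (LagrangeI K _).
Qed.

Lemma abel_order_prod_subgroup : abel_order K <= abel_order K1 * abel_order K2.
Proof.
apply: dvdn_leq; first by rewrite muln_gt0 !abel_order_gt0.
rewrite -(abel_order_isog isog_ker_snd_fst).
exact: abel_order_morphim_dvd (subsetT K).
Qed.

Variables (A : {group aT}) (B : {group bT}).
Hypothesis sKAB : K \subset setX A B.

Lemma prod_subgroup_factors_sub : K1 \subset A /\ K2 \subset B.
Proof.
split; first by rewrite -(morphim_fstX A B) morphimS // subIset ?sKAB.
by rewrite -(morphim_sndX A B) morphimS.
Qed.

Lemma prod_subgroup_factors_proper :
  K \proper setX A B -> (K1 \proper A) || (K2 \proper B).
Proof.
have [sK1A sK2B] := prod_subgroup_factors_sub.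
rewrite !properEcard sKAB sK1A sK2B cardsX card_prod_subgroup /= => ltK.
apply: contraLR ltK; rewrite negb_or -!leqNgt => /andP[leAK1 leBK2].
exact: leq_mul.
Qed.

End SubgroupsOfDirectProduct.

Section TopDirectProduct.
Variables (aT bT : finGroupType) (A : {group aT}) (B : {group bT}).

Lemma weakly_top_setX :
  weakly_top (setX_group A B) <-> weakly_top A /\ weakly_top B.
Proof.
split=> [wtAB | [wtA wtB] K ltK].
  split=> H ltH.
    rewrite -(leq_pmul2r (abel_order_gt0 B)) -!abel_order_setX.
    by rewrite wtAB ?setX_properl ?cardG_gt0.
  rewrite -(leq_pmul2l (abel_order_gt0 A)) -!abel_order_setX.
  by rewrite wtAB ?setX_properr ?cardG_gt0.
have [sK1A sK2B] := prod_subgroup_factors_sub (proper_sub ltK).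
apply: leq_trans (abel_order_prod_subgroup K) _.
by rewrite abel_order_setX leq_mul ?weakly_top_abel_order.
Qed.

Lemma top_setX : top (setX_group A B) <-> top A /\ top B.
Proof.
split=> [tAB | [tA tB] K ltK].
  split=> H ltH.
    rewrite -(ltn_pmul2r (abel_order_gt0 B)) -!abel_order_setX.
    by rewrite tAB ?setX_properl ?cardG_gt0.
  rewrite -(ltn_pmul2l (abel_order_gt0 A)) -!abel_order_setX.
  by rewrite tAB ?setX_properr ?cardG_gt0.
have [sK1A sK2B] := prod_subgroup_factors_sub (proper_sub ltK).
apply: leq_ltn_trans (abel_order_prod_subgroup K) _; rewrite abel_order_setX.
have /orP[ltK1A | ltK2B] := prod_subgroup_factors_proper (proper_sub ltK) ltK.
  rewrite ltn_mull ?abel_order_gt0 ?tA ?weakly_top_abel_order //.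
  exact: top_weakly_top.
rewrite ltn_mulr ?abel_order_gt0 ?tB ?weakly_top_abel_order //.
exact: top_weakly_top.
Qed.

End TopDirectProduct.

Theorem lemma2p3 (aT bT : finGroupType) (A : {group aT}) (B : {group bT}) :
  (weakly_top (setX_group A B) <-> weakly_top A /\ weakly_top B) /\
  (top (setX_group A B) <-> top A /\ top B).
Proof. by split; [apply: weakly_top_setX | apply: top_setX]. Qed.
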